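(* Let $Q$ be a quiver and let $U_\sigma$ be an affine toric variety (with torus $T$) having a unique $T$-fixed point $p$. Suppose that to each arrow $\alpha$ of $Q$ is assigned a regular function $f_\alpha$ on $U_\sigma$ which is either $0$ or a $T$-eigenfunction (a character monomial regular on $U_\sigma$), and for $q\in U_\sigma$ let $V_q$ be the representation of $Q$ with dimension vector $(1,\dots,1)$ representing $\alpha$ by $f_\alpha(q)$. Let $\theta\in\mathrm{Wt}(Q)$. If $V_p$ is $\theta$-stable (resp. $\theta$-semistable), then $V_q$ is $\theta$-stable (resp. $\theta$-semistable) for every $q\in U_\sigma$.
   Context: For a quiver $Q$ with vertex set $Q^0$, $\mathrm{Wt}(Q)=\{\theta:Q^0\to\mathbb Q:\sum_{v\in Q^0}\theta(v)=0\}$. For a representation $V$ with dimension vector $(1,\dots,1)$ (a complex number $V(\alpha)$ for each arrow $\alpha$), subrepresentations correspond to subsets $S\subseteq Q^0$ such that whenever $\alpha$ has tail in $S$ and $V(\alpha)\ne0$ its head lies in $S$; put $\theta(S)=\sum_{v\in S}\theta(v)$. $V$ is $\theta$-stable (resp. $\theta$-semistable) if $\theta(S)>0$ (resp. $\ge0$) for every non-empty proper such subset $S$. *)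

From HB Require Import structures.
From mathcomp Require Import all_boot all_order all_algebra.
From mathcomp Require Import complex.
From mathcomp Require Import Rstruct.
Set Implicit Arguments. Unset Strict Implicit. Unset Printing Implicit Defensive.
Import Order.TTheory GRing.Theory Num.Theory.
Local Open Scope ring_scope.

Definition CC : Type := complex Rdefinitions.R.

(* A quiver: finite vertex type Q0, finite arrow type Q1, tail / head maps.
   A representation with dimension vector (1,..,1) is V : Q1 -> CC. *)

Definition is_weight (Q0 : finType) (theta : Q0 -> rat) : Prop :=
  \sum_(v : Q0) theta v = 0.

Definition theta_of (Q0 : finType) (theta : Q0 -> rat) (S : {set Q0}) : rat :=
  \sum_(v in S) theta v.

(* S is (the vertex set of) a subrepresentation of V *)
Definition is_subrep (Q0 Q1 : finType) (tl hd : Q1 -> Q0) (V : Q1 -> CC)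
  (S : {set Q0}) : bool :=
  [forall a : Q1, ((tl a \in S) && (V a != 0)) ==> (hd a \in S)].

Definition theta_stable (Q0 Q1 : finType) (tl hd : Q1 -> Q0)
  (theta : Q0 -> rat) (V : Q1 -> CC) : Prop :=
  forall S : {set Q0}, S != set0 -> S != [set: Q0] ->
    is_subrep tl hd V S -> 0 < theta_of theta S.

Definition theta_semistable (Q0 Q1 : finType) (tl hd : Q1 -> Q0)
  (theta : Q0 -> rat) (V : Q1 -> CC) : Prop :=
  forall S : {set Q0}, S != set0 -> S != [set: Q0] ->
    is_subrep tl hd V S -> 0 <= theta_of theta S.

(* Lattice M = Z^n (characters), N = Z^n (one-parameter subgroups), both as
   row vectors.  A rational polyhedral cone sigma in N_R is given by finitely
   many generators v_0, ..., v_{k-1} in N. *)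

Definition pairing (n : nat) (m u : 'rV[int]_n) : int := \sum_(j < n) m 0 j * u 0 j.

(* sigma strongly convex: sigma ∩ (-sigma) = {0} *)
Definition strongly_convex (n k : nat) (v : 'I_k -> 'rV[int]_n) : Prop :=
  forall c d : 'I_k -> nat,
    \sum_(i < k) (c i)%:Z *: v i = - \sum_(i < k) (d i)%:Z *: v i ->
    \sum_(i < k) (c i)%:Z *: v i = 0.

Definition in_dual (n k : nat) (v : 'I_k -> 'rV[int]_n) (m : 'rV[int]_n) : bool :=
  [forall i : 'I_k, 0 <= pairing m (v i)].

(* Points of U_sigma = Spec C[S_sigma] = monoid homomorphisms S_sigma -> (C, times).
   A point is represented by a function M -> C which vanishes off S_sigma
   (so that points correspond bijectively to such functions). *)
Definition toric_point (n k : nat) (v : 'I_k -> 'rV[int]_n) (x : 'rV[int]_n -> CC) : Prop :=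
  x 0 = 1 /\
  (forall m1 m2, in_dual v m1 -> in_dual v m2 -> x (m1 + m2) = x m1 * x m2) /\
  (forall m, ~~ in_dual v m -> x m = 0).

(* Torus T = Hom(M, C^times) *)
Definition torus_elt (n : nat) (t : 'rV[int]_n -> CC) : Prop :=
  t 0 = 1 /\ (forall m1 m2, t (m1 + m2) = t m1 * t m2).

Definition torus_act (n : nat) (t x : 'rV[int]_n -> CC) : 'rV[int]_n -> CC :=
  fun m => t m * x m.

Definition torus_fixed (n : nat) (x : 'rV[int]_n -> CC) : Prop :=
  forall t, torus_elt t -> torus_act t x = x.

(* the character monomial c * chi^m (m in S_sigma), as a regular function *)
Definition monomial_fun (n : nat) (c : CC) (m : 'rV[int]_n) (x : 'rV[int]_n -> CC) : CC :=
  c * x m.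

Definition rep_at (n : nat) (Q1 : finType) (c : Q1 -> CC) (mm : Q1 -> 'rV[int]_n)
  (q : 'rV[int]_n -> CC) : Q1 -> CC :=
  fun a => monomial_fun (c a) (mm a) q.

From HB Require Import structures.
From mathcomp Require Import all_boot all_order all_algebra.
From mathcomp Require Import complex Rstruct.
Import Order.TTheory GRing.Theory Num.Theory.
Local Open Scope ring_scope.

(* A T-fixed point p is
   a character of S_sigma invariant under every t in T, so p(m) = t(m) p(m);
   testing this against the coordinate characters t(m) = 2^(m_j) shows that p
   vanishes off m = 0.  Hence V_p(alpha) = c_alpha p(m_alpha) is nonzero only
   when m_alpha = 0, and then V_q(alpha) = c_alpha q(0) = c_alpha for every
   point q.  So V_q has at least the nonzero arrows of V_p, hence at most its
   subrepresentations, and (semi)stability passes from V_p to V_q. *)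

Lemma natr_exprz_eq1 (R : numFieldType) (b : nat) (z : int) :
  (1 < b)%N -> (b%:R : R) ^ z = 1 -> z = 0.
Proof.
have natX_neq1 k : (1 < b)%N -> (b%:R : R) ^+ k.+1 != 1.
  move=> b_gt1; rewrite -natrX -[X in _ == X]/(1%:R : R) eqr_nat.
  by rewrite -[X in _ == X](expn0 b) eqn_exp2l.
case: z => [[|k]|k] // b_gt1 bz1.
- by move/eqP: bz1; rewrite (negbTE (natX_neq1 k b_gt1)).
- move: bz1; rewrite NegzE -exprnN => /(congr1 GRing.inv).
  by rewrite invrK invr1 => /eqP; rewrite (negbTE (natX_neq1 k b_gt1)).
Qed.

Definition coord_char {n : nat} (j : 'I_n) (b : CC) : 'rV[int]_n -> CC :=
  fun m => b ^ m 0 j.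

Lemma coord_char_torus_elt {n : nat} (j : 'I_n) (b : CC) :
  b != 0 -> torus_elt (coord_char j b).
Proof.
move=> b_neq0; split; first by rewrite /coord_char mxE expr0z.
by move=> m1 m2; rewrite /coord_char mxE expfzDr.
Qed.

Lemma torus_fixed_support {n : nat} {p : 'rV[int]_n -> CC} {m : 'rV[int]_n} :
  torus_fixed p -> p m != 0 -> m = 0.
Proof.
move=> p_fixed pm_neq0; apply/rowP => i; rewrite mxE; apply/eqP/negPn/negP => mi_neq0.
have two_neq0 : (2 : CC) != 0 by rewrite pnatr_eq0.
have /(congr1 (fun f => f m)) := p_fixed _ (coord_char_torus_elt i 2 two_neq0).
rewrite /torus_act -[RHS]mul1r => /(mulIf pm_neq0) /(@natr_exprz_eq1 _ 2 _ isT).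
exact/eqP.
Qed.

Lemma rep_at_fixed_support (n : nat) (Q1 : finType) (c : Q1 -> CC)
    (mm : Q1 -> 'rV[int]_n) (p q : 'rV[int]_n -> CC) (a : Q1) :
  torus_fixed p -> q 0 = 1 -> rep_at c mm p a != 0 -> rep_at c mm q a != 0.
Proof.
rewrite /rep_at /monomial_fun mulf_eq0 negb_or => p_fixed q0 /andP[ca_neq0 pma_neq0].
by rewrite (torus_fixed_support p_fixed pma_neq0) q0 mulr1.
Qed.

Section SubrepresentationsOfLargerSupport.

Variables (Q0 Q1 : finType) (tl hd : Q1 -> Q0) (theta : Q0 -> rat) (V W : Q1 -> CC).
Hypothesis supportVW : forall a, V a != 0 -> W a != 0.

Lemma is_subrep_support (S : {set Q0}) :
  is_subrep tl hd W S -> is_subrep tl hd V S.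
Proof.
move=> /forallP subW; apply/forallP => a; apply/implyP => /andP[tlS Va_neq0].
by move/implyP: (subW a); apply; rewrite tlS supportVW.
Qed.

Lemma theta_stable_support :
  theta_stable tl hd theta V -> theta_stable tl hd theta W.
Proof. by move=> stV S S_neq0 S_neqT /is_subrep_support; apply: stV. Qed.

Lemma theta_semistable_support :
  theta_semistable tl hd theta V -> theta_semistable tl hd theta W.
Proof. by move=> sstV S S_neq0 S_neqT /is_subrep_support; apply: sstV. Qed.

End SubrepresentationsOfLargerSupport.

Theorem mainTheorem13
  (Q0 Q1 : finType) (tl hd : Q1 -> Q0)
  (n k : nat) (v : 'I_k -> 'rV[int]_n) (Hconv : strongly_convex v)
  (p : 'rV[int]_n -> CC) (Hp : toric_point v p) (Hpfix : torus_fixed p)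
  (Hpuniq : forall p', toric_point v p' -> torus_fixed p' -> p' = p)
  (c : Q1 -> CC) (mm : Q1 -> 'rV[int]_n) (Hmm : forall a, in_dual v (mm a))
  (theta : Q0 -> rat) (Htheta : is_weight theta) :
  (theta_stable tl hd theta (rep_at c mm p) ->
     forall q, toric_point v q -> theta_stable tl hd theta (rep_at c mm q)) /\
  (theta_semistable tl hd theta (rep_at c mm p) ->
     forall q, toric_point v q -> theta_semistable tl hd theta (rep_at c mm q)).
Proof.
have support_pq q : toric_point v q -> forall a,
    rep_at c mm p a != 0 -> rep_at c mm q a != 0.
  by case=> q0 _ a; apply: rep_at_fixed_support.
split=> stable_p q /support_pq support.
- exact: theta_stable_support support stable_p.
- exact: theta_semistable_support support stable_p.
Qed.
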